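(* Let $f:\mathbb R^n\to\mathbb R$ be convex, differentiable and $L$-Lipschitz smooth, let $g:\mathbb R^n\to\mathbb R\cup\{+\infty\}$ be proper, closed and convex, and let $F=f+g$. Let $\epsilon\ge0$, $\rho>0$, $x\in\mathbb R^n$, and let $\tilde x\approx_\epsilon T_\rho(x)$. Then $$\|x-\tilde x\|\ge (L+\rho)^{-1}\operatorname{dist}\big(\mathbf 0\,\big|\,\partial_\epsilon F(\tilde x)\big).$$
   Context: $f$ is $L$-Lipschitz smooth means $D_f(x,y):=f(x)-f(y)-\langle\nabla f(y),x-y\rangle\le\frac L2\|x-y\|^2$ for all $x,y$ (equivalently, for convex differentiable $f$, $\nabla f$ is $L$-Lipschitz). For a proper $h$, $\epsilon\ge0$, $\partial_\epsilon h(\bar x)=\{v:\langle v,x-\bar x\rangle\le h(x)-h(\bar x)+\epsilon\ \forall x\}$ for $\bar x\in\operatorname{dom}h$, and $\emptyset$ otherwise. The inexact proximal gradient relation $\tilde x\approx_\epsilon T_\rho(x)$ means $\mathbf 0\in\nabla f(x)-\rho(x-\tilde x)+\partial_\epsilon g(\tilde x)$. $\operatorname{dist}(\mathbf 0|S)=\inf_{s\in S}\|s\|$, Euclidean norm. *)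

From HB Require Import structures.
From mathcomp Require Import all_boot all_order all_algebra.
From mathcomp Require Import all_classical all_reals all_analysis.
Set Implicit Arguments. Unset Strict Implicit. Unset Printing Implicit Defensive.
Import Order.TTheory GRing.Theory Num.Theory.
Import numFieldNormedType.Exports.
Local Open Scope classical_set_scope.
Local Open Scope ring_scope.

Section Defs.
Variables (R : realType) (n : nat).
Local Notation vec := 'rV[R]_n.

Definition dotv (u v : vec) : R := \sum_(i < n) u ord0 i * v ord0 i.
Definition enorm (u : vec) : R := Num.sqrt (dotv u u).

Definition grad (f : vec -> R) (x : vec) : vec :=
  \row_(i < n) ('d f x : vec -> R) (delta_mx ord0 i).

Definition convex_fun (f : vec -> R) : Prop :=
  forall x y : vec, forall t : R, 0 <= t <= 1 ->
    f (t *: x + (1 - t) *: y) <= t * f x + (1 - t) * f y.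

Definition breg (f : vec -> R) (x y : vec) : R :=
  f x - f y - dotv (grad f y) (x - y).
Definition lipschitz_smooth (f : vec -> R) (L : R) : Prop :=
  forall x y, breg f x y <= L / 2 * enorm (x - y) ^+ 2.

Definition proper_fun (g : vec -> \bar R) : Prop :=
  (exists x, (g x < +oo)%E) /\ (forall x, (-oo < g x)%E).
Definition closed_fun (g : vec -> \bar R) : Prop :=
  closed [set p : vec * R | (g p.1 <= (p.2)%:E)%E].
Definition convex_efun (g : vec -> \bar R) : Prop :=
  forall x y : vec, forall t : R, 0 < t < 1 ->
    (g (t *: x + (1 - t) *: y)%R <= t%:E * g x + (1 - t)%:E * g y)%E.

(* epsilon-subdifferential; empty outside dom h (dom h = finite values,
   h is proper when used) *)
Definition eps_subdiff (h : vec -> \bar R) (eps : R) (xb : vec) : set vec :=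
  [set v | h xb \is a fin_num /\
     forall x, ((dotv v (x - xb)%R)%:E <= h x - h xb + eps%:E)%E].

Definition inexact_prox (f : vec -> R) (g : vec -> \bar R)
    (eps rho : R) (x xt : vec) : Prop :=
  exists2 v, eps_subdiff g eps xt v &
    grad f x - rho *: (x - xt) + v = 0.

(* dist(0 | S) as an extended real (inf of empty set = +oo) *)
Definition dist0 (S : set vec) : \bar R :=
  ereal_inf [set (enorm v)%:E | v in S].

End Defs.

From HB Require Import structures.
From mathcomp Require Import all_boot all_order all_algebra.
From mathcomp Require Import all_classical all_reals all_analysis.
From mathcomp Require Import lra.
Set Implicit Arguments. Unset Strict Implicit.
Import Order.TTheory GRing.Theory Num.Theory.
Import numFieldNormedType.Exports.
Local Open Scope classical_set_scope.
Local Open Scope ring_scope.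

(* Let v be the certificate of xt ~ T_rho(x), i.e. v is an eps-subgradient of
   g at xt with grad f x - rho (x - xt) + v = 0. Then w := grad f xt + v is an
   eps-subgradient of F = f + g at xt (convexity of f), and
   w = rho (x - xt) - (grad f x - grad f xt).  A convex L-smooth f has a
   co-coercive gradient,
     |grad f x - grad f y|^2 <= L <grad f x - grad f y, x - y>,
   so its gradient is monotone and L-Lipschitz; expanding |w|^2 then gives
   |w| <= (L + rho) |x - xt|, and dist(0 | eps-subdiff F xt) <= |w|. *)

Section InnerProduct.
Variables (R : realType) (n : nat).
Implicit Types u v w : 'rV[R]_n.

Lemma dotvC u v : dotv u v = dotv v u.
Proof. by apply: eq_bigr => i _; rewrite mulrC. Qed.

Lemma dotvDl u v w : dotv (u + v) w = dotv u w + dotv v w.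
Proof. by rewrite /dotv -big_split; apply: eq_bigr => i _; rewrite mxE mulrDl. Qed.

Lemma dotvZl (k : R) u w : dotv (k *: u) w = k * dotv u w.
Proof. by rewrite /dotv mulr_sumr; apply: eq_bigr => i _; rewrite mxE mulrA. Qed.

Lemma dotvNl u w : dotv (- u) w = - dotv u w.
Proof. by rewrite -scaleN1r dotvZl mulN1r. Qed.

Lemma dotvBl u v w : dotv (u - v) w = dotv u w - dotv v w.
Proof. by rewrite dotvDl dotvNl. Qed.

Lemma dotvDr u v w : dotv w (u + v) = dotv w u + dotv w v.
Proof. by rewrite dotvC dotvDl !(dotvC w). Qed.

Lemma dotvZr (k : R) u w : dotv w (k *: u) = k * dotv w u.
Proof. by rewrite dotvC dotvZl dotvC. Qed.

Lemma dotvNr u w : dotv w (- u) = - dotv w u.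
Proof. by rewrite dotvC dotvNl dotvC. Qed.

Lemma dotvBr u v w : dotv w (u - v) = dotv w u - dotv w v.
Proof. by rewrite dotvDr dotvNr. Qed.

Lemma dotvv_ge0 u : 0 <= dotv u u.
Proof. by apply: sumr_ge0 => i _; rewrite -expr2 sqr_ge0. Qed.

Lemma enorm_ge0 u : 0 <= enorm u.
Proof. exact: sqrtr_ge0. Qed.

Lemma enorm_sqr u : enorm u ^+ 2 = dotv u u.
Proof. by rewrite sqr_sqrtr // dotvv_ge0. Qed.

Lemma enormN u : enorm (- u) = enorm u.
Proof. by rewrite /enorm dotvNl dotvNr opprK. Qed.

Lemma enorm_distC u v : enorm (u - v) = enorm (v - u).
Proof. by rewrite -enormN opprB. Qed.

End InnerProduct.

Lemma derive_le_of_slopes (R : realType) (V : normedModType R) (f : V -> R)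
    (a v : V) (c : R) :
  derivable f a v ->
  (forall t : R, 0 < t <= 1 -> t^-1 * (f (t *: v + a) - f a) <= c) ->
  'D_v f a <= c.
Proof.
move=> /cvg_dnbhs_at_right dfav slope_le.
apply: (cvgr_to_le dfav); near=> t; apply: slope_le.
apply/andP; split.
- by near: t; exact: nbhs_right_gt.
- by near: t; exact: nbhs_right_le.
Unshelve. all: by end_near. Qed.

Section Gradient.
Variables (R : realType) (n : nat) (f : 'rV[R]_n -> R).

Lemma dotv_grad a h : dotv (grad f a) h = 'd f a h.
Proof.
rewrite /dotv {2}(matrix_sum_delta h) big_ord1 linear_sum /=.
by apply: eq_bigr => i _; rewrite mxE linearZ /= mulrC (ord1 ord0).
Qed.

Lemma breg_ge0 x y : convex_fun f -> differentiable f y -> 0 <= breg f x y.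
Proof.
move=> fconvex fdiff; rewrite subr_ge0 dotv_grad -deriveE //.
apply: derive_le_of_slopes; first exact: diff_derivable.
move=> t /andP[t_gt0 t_le1].
have -> : t *: (x - y) + y = t *: x + (1 - t) *: y.
  by rewrite scalerBr scalerBl scale1r addrAC addrA.
rewrite ler_pdivrMl //.
have := fconvex x y t; rewrite (ltW t_gt0) t_le1 => /(_ isT).
lra.
Qed.

Lemma breg_add_sym x y :
  breg f x y + breg f y x = dotv (grad f x - grad f y) (x - y).
Proof.
(* Gradients are generalized before rewriting with the dotv lemmas: matching
   against an unfolded [grad f x] makes unification diverge. *)
rewrite /breg; move: (grad f x) (grad f y) => a b.
by rewrite -[y - x]opprB dotvNr dotvBl; lra.
Qed.
End Gradient.

Section ConvexSmooth.
Variables (R : realType) (n : nat) (f : 'rV[R]_n -> R) (L : R).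
Hypotheses (fconvex : convex_fun f) (fdiff : forall y, differentiable f y).
Hypothesis fsmooth : lipschitz_smooth f L.

Lemma grad_monotone x y : 0 <= dotv (grad f x - grad f y) (x - y).
Proof. by rewrite -breg_add_sym addr_ge0 // breg_ge0. Qed.

Lemma grad_inner_le x y :
  dotv (grad f x - grad f y) (x - y) <= L * enorm (x - y) ^+ 2.
Proof.
rewrite -breg_add_sym.
have := fsmooth x y; have := fsmooth y x; rewrite (enorm_distC y x); lra.
Qed.

Lemma sqr_enorm_grad_diff_le_breg x y t :
  (t - L / 2 * t ^+ 2) * enorm (grad f y - grad f x) ^+ 2 <= breg f y x.
Proof.
(* Compare f at the gradient step z = y - t (grad f y - grad f x): convexity
   bounds f z from below at x, smoothness from above at y. *)
have below : 0 <= breg f (y - t *: (grad f y - grad f x)) x :=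
  breg_ge0 _ fconvex (fdiff x).
have above := fsmooth (y - t *: (grad f y - grad f x)) y.
move: below above; rewrite /breg; move: (grad f x) (grad f y) => a b.
have -> : y - t *: (b - a) - x = (y - x) - t *: (b - a) by rewrite addrAC.
have -> : y - t *: (b - a) - y = - (t *: (b - a)) by rewrite addrAC subrr add0r.
rewrite enormN !enorm_sqr (dotvBr (y - x)) dotvNr !dotvZl !dotvZr !(dotvBl b a).
lra.
Qed.

Lemma grad_cocoercive x y :
  enorm (grad f x - grad f y) ^+ 2 <= L * dotv (grad f x - grad f y) (x - y).
Proof.
have quad t : (2 * t - L * t ^+ 2) * enorm (grad f x - grad f y) ^+ 2
              <= dotv (grad f x - grad f y) (x - y).
  have lower_xy := sqr_enorm_grad_diff_le_breg x y t.
  have lower_yx := sqr_enorm_grad_diff_le_breg y x t.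
  rewrite enorm_distC in lower_xy; rewrite -breg_add_sym; lra.
have [L_gt0 | L_le0] := ltrP 0 L.
  have := quad L^-1.
  have -> : 2 * L^-1 - L * L^-1 ^+ 2 = L^-1.
    by rewrite expr2 mulrA mulfV ?gt_eqF // mul1r; lra.
  by rewrite ler_pdivrMl.
have DU0 : dotv (grad f x - grad f y) (x - y) = 0.
  apply/le_anti; rewrite grad_monotone andbT.
  apply: le_trans (grad_inner_le x y) _.
  by rewrite mulr_le0_ge0 // sqr_ge0.
have := quad 1; rewrite DU0 mulr0 expr1n mulr1; nra.
Qed.

Lemma sqr_enorm_grad_diff_le x y :
  enorm (grad f x - grad f y) ^+ 2 <= (L * enorm (x - y)) ^+ 2.
Proof.
have mono := grad_monotone x y; have upper := grad_inner_le x y.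
have cocoer := grad_cocoercive x y.
rewrite exprMn; have [L_ge0 | L_lt0] := lerP 0 L.
  by apply: le_trans cocoer _; rewrite expr2 -mulrA ler_wpM2l.
have UU0 : enorm (x - y) ^+ 2 = 0 by apply/le_anti; rewrite sqr_ge0; nra.
by move: cocoer; rewrite UU0 mulr0; nra.
Qed.

Lemma sqr_enorm_scale_sub_grad_le (rho : R) x y : 0 <= rho ->
  enorm (rho *: (x - y) - (grad f x - grad f y)) ^+ 2
  <= ((L + rho) * enorm (x - y)) ^+ 2.
Proof.
move=> rho_ge0.
have := grad_monotone x y; have := grad_inner_le x y.
have := sqr_enorm_grad_diff_le x y.
move: (grad f x - grad f y) => d; move: (x - y) => u.
rewrite !exprMn !enorm_sqr dotvBl !dotvBr !dotvZl !dotvZr (dotvC u d).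
move=> lip upper mono; have LUU : 0 <= L * dotv u u by apply: le_trans upper.
nra.
Qed.

End ConvexSmooth.

Lemma eps_subdiff_add_grad (R : realType) (n : nat) (f : 'rV[R]_n -> R)
    (g : 'rV[R]_n -> \bar R) (eps : R) (x v : 'rV[R]_n) :
  convex_fun f -> differentiable f x -> eps_subdiff g eps x v ->
  eps_subdiff (fun y => (f y)%:E + g y)%E eps x (grad f x + v).
Proof.
move=> fconvex fdiff [gx_fin gv]; split; first by rewrite fin_numD gx_fin.
move=> y; have := breg_ge0 y fconvex fdiff; rewrite subr_ge0 => fgrad.
rewrite dotvDl EFinD.
move: gx_fin (gv y); case: (g x) => [gx| |] //= _; case: (g y) => [gy| |] //=.
  by rewrite -!EFinD !lee_fin; lra.
by move=> _; rewrite addey // !addye // leey.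
Qed.

Section DistanceToZero.
Variables (R : realType) (n : nat).
Implicit Type S : set 'rV[R]_n.

Lemma dist0_ge0 S : (0 <= dist0 S)%E.
Proof. by apply/ereal_infP => _ [v _ <-]; rewrite lee_fin enorm_ge0. Qed.

Lemma dist0_le S v : S v -> (dist0 S <= (enorm v)%:E)%E.
Proof. by move=> Sv; apply: ereal_inf_lbound; exists v. Qed.

End DistanceToZero.

Unset Implicit Arguments. Set Strict Implicit.

Theorem lemma2p14 (R : realType) (n : nat) (f : 'rV[R]_n -> R)
  (g : 'rV[R]_n -> \bar R) (L eps rho : R) (x xt : 'rV[R]_n) :
  convex_fun f -> (forall y, differentiable f y) -> lipschitz_smooth f L ->
  proper_fun g -> closed_fun g -> convex_efun g ->
  0 <= eps -> 0 < rho ->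
  inexact_prox f g eps rho x xt ->
  ((L + rho)^-1%:E * dist0 (eps_subdiff (fun y => (f y)%:E + g y)%E eps xt)
     <= (enorm (x - xt))%:E)%E.
Proof.
move=> fconvex fdiff fsmooth _ _ _ _ rho_gt0 [v gv prox].
have w_in := eps_subdiff_add_grad fconvex (fdiff xt) gv.
have w_eq : grad f xt + v = rho *: (x - xt) - (grad f x - grad f xt).
  move: prox; move: (grad f x) (grad f xt) => a b prox.
  have -> : v = rho *: (x - xt) - a.
    by rewrite -[v](addKr (a - rho *: (x - xt))) prox addr0 opprB.
  by rewrite addrCA opprB.
have [c_gt0 | c_le0] := ltrP 0 (L + rho).
  have w_le : enorm (grad f xt + v) <= (L + rho) * enorm (x - xt).
    have := sqr_enorm_scale_sub_grad_le fconvex fdiff fsmooth x xt (ltW rho_gt0).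
    rewrite -w_eq ler_sqr ?nnegrE ?enorm_ge0 //.
    by rewrite mulr_ge0 ?enorm_ge0 ?ltW.
  apply: le_trans (lee_wpmul2l _ (dist0_le w_in)) _.
    by rewrite lee_fin invr_ge0 ltW.
  by rewrite -EFinM lee_fin ler_pdivrMl.
apply: le_trans (mule_le0_ge0 _ (dist0_ge0 _)) _.
  by rewrite lee_fin invr_le0.
by rewrite lee_fin enorm_ge0.
Qed.
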